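(* Let $\mathbf C$ be a symmetric monoidal restriction category. The tensor unit $I$ of $\mathrm{Aux}(\mathbf C)$ is restriction terminal: for every object $A$, the morphism $!_A=[\lambda_A^{-1},A]\colon A\to I$ is total, and every total morphism $[f,E]\colon A\to I$ of $\mathrm{Aux}(\mathbf C)$ equals $!_A$. Consequently $\mathrm{Aux}(\mathbf C)$ is affine, and the projections $\pi_1=\rho_A\circ(\mathrm{id}_A\otimes !_B)\colon A\otimes B\to A$ and $\pi_2=\lambda_B\circ(!_A\otimes\mathrm{id}_B)\colon A\otimes B\to B$ (formed in $\mathrm{Aux}(\mathbf C)$) are total.
   Context: A restriction category is a category equipped with an assignment to each morphism $f\colon A\to B$ of an endomorphism $\overline{f}\colon A\to A$ such that (i) $f\circ\overline f=f$; (ii) $\overline f\circ\overline g=\overline g\circ\overline f$ whenever $f,g$ have a common domain; (iii) $\overline{g\circ\overline f}=\overline g\circ\overline f$ whenever $f,g$ have a common domain; (iv) $\overline g\circ f=f\circ\overline{g\circ f}$ whenever $g\circ f$ is defined. A morphism $f$ is total if $\overline f=\mathrm{id}$. A (symmetric) monoidal restriction category is a restriction category with a (symmetric) monoidal structure such that $\overline{f\otimes g}=\overline f\otimes\overline g$. An object $1$ is restriction terminal if every object has exactly one total morphism to $1$; a symmetric monoidal restriction category is affine if its tensor unit is restriction terminal. Let $\mathbf C$ be a symmetric monoidal restriction category with tensor unit $I$, associator $\alpha$, left unitor $\lambda$, right unitor $\rho$. For morphisms $f\colon A\to B\otimes E$ and $f'\colon A\to B\otimes E'$ write $f\triangleright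 f'$ if $\overline f=\overline{f'}$ and there is a morphism $h\colon E\to E'$ with $(\mathrm{id}_B\otimes h)\circ f=f'$. Let $\sim$ be the equivalence relation generated by $\triangleright$. The category $\mathrm{Aux}(\mathbf C)$ has the objects of $\mathbf C$; a morphism $A\to B$ is a $\sim$-class $[f,E]$ of a morphism $f\colon A\to B\otimes E$ of $\mathbf C$; composition is $[g,E']\circ[f,E]=[\alpha\circ(g\otimes\mathrm{id}_E)\circ f,\;E'\otimes E]$; identities are $[\rho^{-1},I]$. It is a symmetric monoidal restriction category with $\overline{[f,E]}=[\rho^{-1}\circ\overline f,I]$, tensor on objects as in $\mathbf C$, $[f,E]\otimes[f',E']=[\vartheta\circ(f\otimes f'),E\otimes E']$ where $\vartheta\colon(B\otimes E)\otimes(B'\otimes E')\cong(B\otimes B')\otimes(E\otimes E')$ is the canonical isomorphism, and coherence isomorphisms $[\rho^{-1}\circ\beta,I]$ for coherence isomorphisms $\beta$ of $\mathbf C$ (unitors of $\mathrm{Aux}(\mathbf C)$ are again written $\lambda,\rho$). *)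

From Stdlib Require Import Relations.Relation_Operators.

Set Implicit Arguments.
Unset Strict Implicit.

Record SMRC := {
  ob : Type;
  hom : ob -> ob -> Type;
  idm : forall A, hom A A;
  comp : forall A B C, hom B C -> hom A B -> hom A C;
  comp_id_l : forall A B (f : hom A B), comp (idm B) f = f;
  comp_id_r : forall A B (f : hom A B), comp f (idm A) = f;
  comp_assoc : forall A B C D (h : hom C D) (g : hom B C) (f : hom A B),
      comp h (comp g f) = comp (comp h g) f;
  restr : forall A B, hom A B -> hom A A;
  R1 : forall A B (f : hom A B), comp f (restr f) = f;
  R2 : forall A B C (f : hom A B) (g : hom A C),
      comp (restr f) (restr g) = comp (restr g) (restr f);
  R3 : forall A B C (f : hom A B) (g : hom A C),
      restr (comp g (restr f)) = comp (restr g) (restr f);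
  R4 : forall A B C (f : hom A B) (g : hom B C),
      comp (restr g) f = comp f (restr (comp g f));
  tens : ob -> ob -> ob;
  tensm : forall A B A' B', hom A B -> hom A' B' -> hom (tens A A') (tens B B');
  tensm_id : forall A A', tensm (idm A) (idm A') = idm (tens A A');
  tensm_comp : forall A B C A' B' C' (g : hom B C) (f : hom A B)
      (g' : hom B' C') (f' : hom A' B'),
      comp (tensm g g') (tensm f f') = tensm (comp g f) (comp g' f');
  unit : ob;
  alpha : forall A B C, hom (tens (tens A B) C) (tens A (tens B C));
  alpha_inv : forall A B C, hom (tens A (tens B C)) (tens (tens A B) C);
  lam : forall A, hom (tens unit A) A;
  lam_inv : forall A, hom A (tens unit A);
  rho : forall A, hom (tens A unit) A;
  rho_inv : forall A, hom A (tens A unit);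
  sigma : forall A B, hom (tens A B) (tens B A);
  alpha_iso1 : forall A B C, comp (alpha A B C) (alpha_inv A B C) = idm _;
  alpha_iso2 : forall A B C, comp (alpha_inv A B C) (alpha A B C) = idm _;
  lam_iso1 : forall A, comp (lam A) (lam_inv A) = idm _;
  lam_iso2 : forall A, comp (lam_inv A) (lam A) = idm _;
  rho_iso1 : forall A, comp (rho A) (rho_inv A) = idm _;
  rho_iso2 : forall A, comp (rho_inv A) (rho A) = idm _;
  alpha_nat : forall A B C A' B' C' (f : hom A A') (g : hom B B') (h : hom C C'),
      comp (alpha A' B' C') (tensm (tensm f g) h)
      = comp (tensm f (tensm g h)) (alpha A B C);
  lam_nat : forall A B (f : hom A B),
      comp (lam B) (tensm (idm unit) f) = comp f (lam A);
  rho_nat : forall A B (f : hom A B),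
      comp (rho B) (tensm f (idm unit)) = comp f (rho A);
  sigma_nat : forall A B A' B' (f : hom A A') (g : hom B B'),
      comp (sigma A' B') (tensm f g) = comp (tensm g f) (sigma A B);
  triangle : forall A B,
      comp (tensm (idm A) (lam B)) (alpha A unit B) = tensm (rho A) (idm B);
  pentagon : forall A B C D,
      comp (tensm (idm A) (alpha B C D))
        (comp (alpha A (tens B C) D) (tensm (alpha A B C) (idm D)))
      = comp (alpha A B (tens C D)) (alpha (tens A B) C D);
  hexagon : forall A B C,
      comp (alpha B C A) (comp (sigma A (tens B C)) (alpha A B C))
      = comp (tensm (idm B) (sigma A C))
          (comp (alpha B A C) (tensm (sigma A B) (idm C)));
  sigma_sym : forall A B, comp (sigma B A) (sigma A B) = idm (tens A B);
  restr_tensm : forall A B A' B' (f : hom A B) (g : hom A' B'),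
      restr (tensm f g) = tensm (restr f) (restr g)
}.

Arguments hom {s} _ _.
Arguments idm {s} A.
Arguments comp {s A B C} g f.
Arguments restr {s A B} f.
Arguments tens {s} _ _.
Arguments tensm {s A B A' B'} f g.
Arguments unit {s}.
Arguments alpha {s} A B C.
Arguments alpha_inv {s} A B C.
Arguments lam {s} A.
Arguments lam_inv {s} A.
Arguments rho {s} A.
Arguments rho_inv {s} A.
Arguments sigma {s} A B.

Section Aux.
Variable C : SMRC.

(** A representative (f, E) of a morphism A -> B of Aux(C): f : A -> B (x) E. *)
Record auxm (A B : ob C) := AuxM { aux_E : ob C; aux_f : hom A (tens B aux_E) }.
Arguments AuxM {A B} aux_E aux_f.

Definition aux_tri A B (p q : auxm A B) : Prop :=
  restr (aux_f p) = restr (aux_f q) /\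
  exists h : hom (aux_E p) (aux_E q), comp (tensm (idm B) h) (aux_f p) = aux_f q.

(** ~ : equivalence relation generated by |>; equality of morphisms of Aux(C). *)
Definition aux_eq A B : auxm A B -> auxm A B -> Prop :=
  clos_refl_sym_trans (auxm A B) (@aux_tri A B).

Definition aux_id (A : ob C) : auxm A A := AuxM unit (rho_inv A).

Definition aux_comp A B D (g : auxm B D) (f : auxm A B) : auxm A D :=
  AuxM (tens (aux_E g) (aux_E f))
       (comp (alpha D (aux_E g) (aux_E f)) (comp (tensm (aux_f g) (idm (aux_E f))) (aux_f f))).

Definition aux_restr A B (f : auxm A B) : auxm A A :=
  AuxM unit (comp (rho_inv A) (restr (aux_f f))).

Definition theta (B E B' E' : ob C) :
  hom (tens (tens B E) (tens B' E')) (tens (tens B B') (tens E E')) :=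
  comp (alpha_inv B B' (tens E E'))
  (comp (tensm (idm B) (alpha B' E E'))
  (comp (tensm (idm B) (tensm (sigma E B') (idm E')))
  (comp (tensm (idm B) (alpha_inv E B' E'))
        (alpha B E (tens B' E'))))).

Definition aux_tensor A B A' B' (f : auxm A B) (f' : auxm A' B') :
  auxm (tens A A') (tens B B') :=
  AuxM (tens (aux_E f) (aux_E f'))
       (comp (theta B (aux_E f) B' (aux_E f')) (tensm (aux_f f) (aux_f f'))).

Definition aux_coh A B (beta : hom A B) : auxm A B :=
  AuxM unit (comp (rho_inv B) beta).

Definition aux_lam (B : ob C) : auxm (tens unit B) B := aux_coh (lam B).
Definition aux_rho (A : ob C) : auxm (tens A unit) A := aux_coh (rho A).

Definition aux_total A B (f : auxm A B) : Prop := aux_eq (aux_restr f) (aux_id A).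

Definition aux_bang (A : ob C) : auxm A unit := AuxM A (lam_inv A).

Definition aux_restriction_terminal (X : ob C) : Prop :=
  forall A : ob C, exists t : auxm A X,
    aux_total t /\ forall t' : auxm A X, aux_total t' -> aux_eq t' t.

Definition aux_affine : Prop := aux_restriction_terminal unit.

Definition aux_pi1 (A B : ob C) : auxm (tens A B) A :=
  aux_comp (aux_rho A) (aux_tensor (aux_id A) (aux_bang B)).
Definition aux_pi2 (A B : ob C) : auxm (tens A B) B :=
  aux_comp (aux_lam B) (aux_tensor (aux_bang A) (aux_id B)).

End Aux.

(** Totality of a morphism [A, E] of Aux(C) is a property of its representative:
    since [f ~ g] forces [restr f = restr g], and [rho^-1] is total, the
    morphism [f, E] is total in Aux(C) exactly when [f] is total in C.  So all
    totality claims reduce to totality in C, where total maps contain every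
    split monomorphism (in particular all coherence isomorphisms) and are
    closed under composition and tensor.  This gives totality of
    [!_A = [lambda_A^-1, A]] and, through closure of totality under the
    composition and tensor of Aux(C), of the projections [pi1] and [pi2].
    Uniqueness: for a total [f : A -> I (x) E] the map [h := lambda_E o f]
    witnesses [!_A |> f], because naturality of [lambda] gives
    [(id_I (x) h) o lambda_A^-1 = lambda_E^-1 o lambda_E o f = f], and both
    representatives have restriction the identity. *)

From Stdlib Require Import Relations.Relation_Operators.

Section TotalMaps.
Context {C : SMRC}.

Definition total {A B : ob C} (f : hom A B) : Prop := restr f = idm A.

Lemma total_idm (A : ob C) : total (idm A).
Proof. unfold total. rewrite <- (comp_id_l (restr (idm A))). apply R1. Qed.

(** Split monomorphisms are total: from [g o f = id], axiom (R3) gives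
    [id = restr (g o f) = restr (g o f) o restr f = restr f]. *)
Lemma total_of_section {A B : ob C} {f : hom A B} {g : hom B A} :
  comp g f = idm A -> total f.
Proof.
  intro Hgf. unfold total.
  assert (Hr : restr (comp g f) = comp (restr (comp g f)) (restr f)).
  { rewrite <- R3, <- comp_assoc, R1. reflexivity. }
  rewrite Hgf, (total_idm A), comp_id_l in Hr. symmetry. exact Hr.
Qed.

(** Total maps compose: by (R4), [f = f o restr (g o f)] when [g] is total,
    and (R3) then identifies [restr f] with [restr (g o f)]. *)
Lemma total_comp {A B D : ob C} (f : hom A B) (g : hom B D) :
  total f -> total g -> total (comp g f).
Proof.
  unfold total. intros Hf Hg.
  pose proof (R4 f g) as Hfac. rewrite Hg, comp_id_l in Hfac.
  assert (Hr : restr f = restr (comp f (restr (comp g f)))) by (rewrite <- Hfac; reflexivity).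
  rewrite R3, Hf, comp_id_l in Hr. symmetry. exact Hr.
Qed.

Lemma total_tensm {A B A' B' : ob C} (f : hom A B) (g : hom A' B') :
  total f -> total g -> total (tensm f g).
Proof. unfold total. intros Hf Hg. rewrite restr_tensm, Hf, Hg. apply tensm_id. Qed.

Lemma total_alpha (A B D : ob C) : total (alpha A B D).
Proof. exact (total_of_section (alpha_iso2 A B D)). Qed.

Lemma total_alpha_inv (A B D : ob C) : total (alpha_inv A B D).
Proof. exact (total_of_section (alpha_iso1 A B D)). Qed.

Lemma total_lam (A : ob C) : total (lam A).
Proof. exact (total_of_section (lam_iso2 A)). Qed.

Lemma total_lam_inv (A : ob C) : total (lam_inv A).
Proof. exact (total_of_section (lam_iso1 A)). Qed.

Lemma total_rho (A : ob C) : total (rho A).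
Proof. exact (total_of_section (rho_iso2 A)). Qed.

Lemma total_rho_inv (A : ob C) : total (rho_inv A).
Proof. exact (total_of_section (rho_iso1 A)). Qed.

Lemma total_sigma (A B : ob C) : total (sigma A B).
Proof. exact (total_of_section (sigma_sym A B)). Qed.

Lemma total_theta (B E B' E' : ob C) : total (theta B E B' E').
Proof.
  unfold theta.
  repeat apply total_comp;
    auto using total_tensm, total_idm, total_alpha, total_alpha_inv, total_sigma.
Qed.

(** Naturality of [lambda], solved for [id_I (x) h]. *)
Lemma tensm_unit_l {A B : ob C} (h : hom A B) :
  tensm (idm unit) h = comp (lam_inv B) (comp h (lam A)).
Proof. rewrite <- lam_nat, comp_assoc, lam_iso2, comp_id_l. reflexivity. Qed.

End TotalMaps.

Section AuxTotality.
Context {C : SMRC}.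

Lemma aux_eq_restr {A B : ob C} (p q : auxm A B) :
  aux_eq p q -> restr (aux_f p) = restr (aux_f q).
Proof.
  induction 1 as [p q [Hpq _] | p | p q _ IH | p q r _ IH1 _ IH2]; congruence.
Qed.

Lemma aux_total_iff {A B : ob C} (t : auxm A B) : aux_total t <-> total (aux_f t).
Proof.
  unfold aux_total, aux_restr, total. split.
  - intro Ht. apply aux_eq_restr in Ht. simpl in Ht.
    rewrite R3, (total_rho_inv A), comp_id_l in Ht. exact Ht.
  - intro Hf. rewrite Hf, comp_id_r. apply rst_refl.
Qed.

Lemma aux_total_id (A : ob C) : aux_total (aux_id A).
Proof. apply aux_total_iff, total_rho_inv. Qed.

Lemma aux_total_comp {A B D : ob C} (g : auxm B D) (f : auxm A B) :
  aux_total g -> aux_total f -> aux_total (aux_comp g f).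
Proof.
  intros Hg%aux_total_iff Hf%aux_total_iff. apply aux_total_iff. simpl.
  apply total_comp; [apply total_comp |]; auto using total_tensm, total_idm, total_alpha.
Qed.

Lemma aux_total_tensor {A B A' B' : ob C} (f : auxm A B) (f' : auxm A' B') :
  aux_total f -> aux_total f' -> aux_total (aux_tensor f f').
Proof.
  intros Hf%aux_total_iff Hf'%aux_total_iff. apply aux_total_iff. simpl.
  apply total_comp; auto using total_tensm, total_theta.
Qed.

Lemma aux_total_coh {A B : ob C} (beta : hom A B) :
  total beta -> aux_total (aux_coh beta).
Proof. intro Hb. apply aux_total_iff, total_comp; auto using total_rho_inv. Qed.

Lemma aux_total_bang (A : ob C) : aux_total (aux_bang A).
Proof. apply aux_total_iff, total_lam_inv. Qed.

(** Every total morphism [f, E] : A -> I of Aux(C) equals [!_A]: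
    [h := lambda_E o f] witnesses [!_A |> (f, E)]. *)
Lemma aux_total_to_unit_eq_bang {A : ob C} (t : auxm A unit) :
  aux_total t -> aux_eq t (aux_bang A).
Proof.
  destruct t as [E f]. intro Ht.
  apply aux_total_iff in Ht. pose proof (aux_total_bang A) as Hb.
  apply aux_total_iff in Hb. unfold total in *. simpl in *.
  apply rst_sym, rst_step. split; simpl.
  - congruence.
  - exists (comp (lam E) f).
    rewrite tensm_unit_l, <- !comp_assoc, lam_iso1, comp_id_r, comp_assoc,
      lam_iso2, comp_id_l.
    reflexivity.
Qed.

End AuxTotality.

Theorem mainTheorem5 (C : SMRC) :
  (forall A : ob C, aux_total (aux_bang A)) /\
  (forall (A : ob C) (t : auxm A unit), aux_total t -> aux_eq t (aux_bang A)) /\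
  aux_affine C /\
  (forall A B : ob C, aux_total (aux_pi1 A B) /\ aux_total (aux_pi2 A B)).
Proof.
  split; [exact aux_total_bang |].
  split; [exact (@aux_total_to_unit_eq_bang C) |].
  split.
  - intro A. exists (aux_bang A).
    split; [apply aux_total_bang | apply aux_total_to_unit_eq_bang].
  - intros A B. split; apply aux_total_comp.
    + apply aux_total_coh, total_rho.
    + apply aux_total_tensor; [apply aux_total_id | apply aux_total_bang].
    + apply aux_total_coh, total_lam.
    + apply aux_total_tensor; [apply aux_total_bang | apply aux_total_id].
Qed.
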